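(* Let $A_1,\dots,A_m\in\mathbb{C}^{n\times n}$ be Hermitian matrices. There exists $P\in\mathrm{GL}_n(\mathbb{C})$ such that $P^*A_iP$ is diagonal for every $1\le i\le m$ if and only if $Z(A_1,\dots,A_m)$ contains $n$ nonzero matrices $\epsilon_1,\dots,\epsilon_n$ with $\epsilon_j^2=\epsilon_j$, $\epsilon_j\epsilon_l=0$ for $j\neq l$, and $\epsilon_1+\cdots+\epsilon_n=I_n$.
   Context: For Hermitian $A_1,\dots,A_m\in\mathbb{C}^{n\times n}$, the center is $Z(A_1,\dots,A_m)=\{X\in\mathbb{C}^{n\times n} : (A_iX)^*=A_iX \text{ for all } i\}$, where $^*$ denotes conjugate transpose. *)

From HB Require Import structures.
From mathcomp Require Import all_boot all_order all_algebra.
From mathcomp Require Import complex.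
Set Implicit Arguments. Unset Strict Implicit. Unset Printing Implicit Defensive.
Import Order.TTheory GRing.Theory Num.Theory.
Local Open Scope ring_scope.

(* Complex numbers are R[i] for a real closed field R (R = reals gives C). *)

Definition ctrmx (C : numClosedFieldType) (m n : nat) (A : 'M[C]_(m, n)) : 'M[C]_(n, m) :=
  \matrix_(i < n, j < m) (A j i)^*.

Definition is_hermitian_mx (C : numClosedFieldType) (n : nat) (A : 'M[C]_n) : Prop :=
  ctrmx A = A.

Definition center_set (C : numClosedFieldType) (n m : nat) (A : 'I_m -> 'M[C]_n)
  (X : 'M[C]_n) : Prop :=
  forall i : 'I_m, ctrmx (A i *m X) = A i *m X.

From HB Require Import structures.
From mathcomp Require Import all_boot all_order all_algebra.
From mathcomp Require Import complex.
Set Implicit Arguments. Unset Strict Implicit. Unset Printing Implicit Defensive.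
Import Order.TTheory GRing.Theory Num.Theory.
Local Open Scope ring_scope.

(* If P^* A_k P = D_k is diagonal for all k, the projections
   P E_jj P^-1 onto the columns of P form the required family: A_k P E_jj P^-1
   is congruent (by P) to D_k E_jj, which is Hermitian.  Conversely, given the
   family eps_j, choose a nonzero column of each eps_j and let P have these
   columns; orthogonality of the eps_j makes P invertible, and the (j, l) entry
   of P^* A_k P is an entry of eps_j^* A_k eps_l = (A_k eps_j)^* eps_l
   = A_k eps_j eps_l, which vanishes for j != l. *)

Section ConjugateTranspose.
Context {C : numClosedFieldType}.

Lemma ctrmxK m n (X : 'M[C]_(m, n)) : ctrmx (ctrmx X) = X.
Proof. by apply/matrixP => i j; rewrite !mxE conjCK. Qed.

Lemma ctrmx_mul m n p (X : 'M[C]_(m, n)) (Y : 'M[C]_(n, p)) :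
  ctrmx (X *m Y) = ctrmx Y *m ctrmx X.
Proof.
apply/matrixP => i j; rewrite !mxE rmorph_sum; apply: eq_bigr => k _.
by rewrite !mxE rmorphM mulrC.
Qed.

Lemma ctrmx1 n : ctrmx (1%:M : 'M[C]_n) = 1%:M.
Proof. by apply/matrixP => i j; rewrite !mxE rmorph_nat eq_sym. Qed.

Lemma ctrmx_delta m n (i : 'I_m) (j : 'I_n) :
  ctrmx (delta_mx i j : 'M[C]_(m, n)) = delta_mx j i.
Proof. by apply/matrixP => a b; rewrite !mxE rmorph_nat andbC. Qed.

Lemma unitmx_ctrmx n (P : 'M[C]_n) : P \in unitmx -> ctrmx P \in unitmx.
Proof.
move=> uP; have : ctrmx P *m ctrmx (invmx P) = 1%:M.
  by rewrite -ctrmx_mul mulVmx // ctrmx1.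
by case/mulmx1_unit.
Qed.

Lemma hermitian_congr n (P M : 'M[C]_n) : P \in unitmx ->
  is_hermitian_mx (ctrmx P *m M *m P) <-> is_hermitian_mx M.
Proof.
rewrite /is_hermitian_mx !ctrmx_mul ctrmxK -!mulmxA => uP; split=> [|->//].
move=> /(congr1 (mulmx (invmx (ctrmx P)))); rewrite !mulKmx ?unitmx_ctrmx //.
by move=> /(congr1 (mulmx^~ (invmx P))); rewrite !mulmxK.
Qed.

Lemma diag_mx_delta_comm n (D : 'M[C]_n) j :
  is_diag_mx D -> delta_mx j j *m D = D *m delta_mx j j.
Proof.
case/diag_mxP => d ->; apply/matrixP => a b.
rewrite mul_diag_mx mul_mx_diag !mxE.
by case: (eqVneq a j) => [->|_]; case: (eqVneq b j) => [->|_];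
  rewrite ?andbF ?mulr0 ?mul0r // mulrC.
Qed.

Lemma hermitian_diag_mul_delta n (D : 'M[C]_n) j :
  is_hermitian_mx D -> is_diag_mx D -> is_hermitian_mx (D *m delta_mx j j).
Proof.
move=> hD dD; rewrite /is_hermitian_mx ctrmx_mul ctrmx_delta hD.
exact: diag_mx_delta_comm.
Qed.

Lemma ctrmx_mulmx_orth0 n (M X Y : 'M[C]_n) :
  is_hermitian_mx M -> ctrmx (M *m X) = M *m X -> X *m Y = 0 ->
  ctrmx X *m M *m Y = 0.
Proof.
by move=> hM cX XY; rewrite -{1}hM -ctrmx_mul cX -mulmxA XY mulmx0.
Qed.

End ConjugateTranspose.

Section ColumnProjections.
Variables (F : fieldType) (n : nat) (P : 'M[F]_n).
Hypothesis uP : P \in unitmx.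

Definition colproj (j : 'I_n) : 'M[F]_n := P *m delta_mx j j *m invmx P.

Lemma colproj_neq0 j : colproj j != 0.
Proof.
apply/eqP => /(congr1 (fun X => invmx P *m X *m P)).
rewrite /colproj !mulmxA mulVmx // mul1mx mulmxKV // mulmx0 mul0mx.
by move=> /matrixP /(_ j j); rewrite !mxE !eqxx => /eqP; rewrite oner_eq0.
Qed.

Lemma colprojM j l :
  colproj j *m colproj l = P *m (delta_mx j j *m delta_mx l l) *m invmx P.
Proof. by rewrite /colproj !mulmxA mulmxKV. Qed.

Lemma colproj_idem j : colproj j *m colproj j = colproj j.
Proof. by rewrite colprojM mul_delta_mx. Qed.

Lemma colproj_orth j l : j != l -> colproj j *m colproj l = 0.
Proof. by move=> jl; rewrite colprojM mul_delta_mx_0 // mulmx0 mul0mx. Qed.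

Lemma sum_colproj : \sum_j colproj j = 1%:M.
Proof. by rewrite -mulmx_suml -mulmx_sumr -mx1_sum_delta mulmx1 mulmxV. Qed.

End ColumnProjections.

Lemma colproj_center (C : numClosedFieldType) n m (A : 'I_m -> 'M[C]_n)
    (P : 'M[C]_n) j :
  (forall k, is_hermitian_mx (A k)) -> P \in unitmx ->
  (forall k, is_diag_mx (ctrmx P *m A k *m P)) -> center_set A (colproj P j).
Proof.
move=> hA uP dP k; apply: (iffLR (hermitian_congr (A k *m colproj P j) uP)).
have -> : ctrmx P *m (A k *m colproj P j) *m P = ctrmx P *m A k *m P *m delta_mx j j.
  by rewrite /colproj !mulmxA mulmxKV.
apply: hermitian_diag_mul_delta; last exact: dP.
exact: (iffRL (hermitian_congr (A k) uP)).
Qed.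

Section SelectedColumns.
Variables (F : fieldType) (n : nat) (E : 'I_n -> 'M[F]_n) (c : 'I_n -> 'I_n).

Definition mxcols : 'M[F]_n := \matrix_(i, l) E l i (c l).

Lemma mxcols_unit (r : 'I_n -> 'I_n) :
  (forall j, E j *m E j = E j) -> (forall j l, j != l -> E j *m E l = 0) ->
  (forall j, E j (r j) (c j) != 0) -> mxcols \in unitmx.
Proof.
move=> idem orth nz.
(* Row j of the left inverse is row r j of E j, normalized. *)
pose Q := \matrix_(j, i) (E j (r j) i / E j (r j) (c j)).
suff /mulmx1_unit[] : Q *m mxcols = 1%:M by [].
apply/matrixP => j l; rewrite [RHS]mxE.
transitivity ((E j *m E l) (r j) (c l) / E j (r j) (c j)).
  by rewrite !mxE mulr_suml; apply: eq_bigr => i _; rewrite !mxE mulrAC.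
case: (eqVneq j l) => [<-|jl]; first by rewrite idem divff.
by rewrite orth // mxE mul0r.
Qed.

End SelectedColumns.

Lemma mxcols_congrE (C : numClosedFieldType) n (E : 'I_n -> 'M[C]_n) c M j l :
  (ctrmx (mxcols E c) *m M *m mxcols E c) j l =
  (ctrmx (E j) *m M *m E l) (c j) (c l).
Proof.
rewrite !mxE; apply: eq_bigr => b _; rewrite !mxE; congr (_ * _).
by apply: eq_bigr => a _; rewrite !mxE.
Qed.

Theorem mainTheorem9 (R : rcfType) (n m : nat) (A : 'I_m -> 'M[R[i]]_n)
  (hA : forall k, is_hermitian_mx (A k)) :
  (exists P : 'M[R[i]]_n, P \in unitmx /\
     forall k, is_diag_mx (ctrmx P *m A k *m P))
  <->
  (exists eps : 'I_n -> 'M[R[i]]_n,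
     (forall j, center_set A (eps j)) /\
     (forall j, eps j != 0) /\
     (forall j, eps j *m eps j = eps j) /\
     (forall j l, j != l -> eps j *m eps l = 0) /\
     \sum_(j < n) eps j = 1%:M).
Proof.
split=> [[P [uP dP]] | [eps [cen [nz [idem [orth _]]]]]].
  exists (colproj P); split=> [j|]; first exact: colproj_center hA uP dP.
  split=> [j|]; first exact: colproj_neq0 uP j.
  split=> [j|]; first exact: colproj_idem uP j.
  split=> [j l|]; [exact: colproj_orth uP j l | exact: sum_colproj uP].
have /fin_all_exists[rc nz_rc] : forall j, exists rc, eps j rc.1 rc.2 != 0.
  by move=> j; case/matrix0Pn: (nz j) => a [b ?]; exists (a, b).
exists (mxcols eps (fun j => (rc j).2)).
split; first exact: mxcols_unit idem orth nz_rc.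
move=> k; apply/is_diag_mxP => j l jl.
by rewrite mxcols_congrE (ctrmx_mulmx_orth0 (hA k) (cen j k) (orth j l jl)) mxE.
Qed.
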